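(* Let $\phi_0 := 1 - \dfrac{(a\beta_0 - \sqrt{r})^2}{a\mu + r}$ and $\phi_1 := \dfrac{a^2\beta_0^2 + a\mu}{a\mu + r}$. Then: (1) $a\beta_0 - 2\sqrt{r} < \dfrac{\mu}{\beta_0}$ if and only if $\phi_0 > 0$; (2) $\mathcal{R}_0 > \phi_1$; (3) if $a\beta_0 < \sqrt{r}$, then $\phi_1 < 1$; (4) $a\beta_0 < \sqrt{r}$ if and only if $\phi_1 < \phi_0$.
   Context: Consider the autonomous planar system $\dot S = S(A-S) - \beta_0 I S$, $\dot I = \beta_0 I S - \mu I - \dfrac{rI}{a+I}$ on $(\mathbb{R}_0^+)^2$, with all parameters $A, r, \beta_0, a, \mu$ positive (here $\mu$ denotes the sum of the natural death rate and the disease death rate). The basic reproduction number is $\mathcal{R}_0 = \dfrac{\beta_0 A}{\mu + r/a}$. It is assumed that $S(t)\le A$ for all $t\ge 0$. Let $\Delta = \left(a\beta_0 + A - \frac{\mu}{\beta_0}\right)^2 - 4r > 0$, so that the system has two endemic equilibria $E_3=(S_3,I_3)$, $E_4=(S_4,I_4)$ with $S_{3,4} = \dfrac{a\beta_0 + A + \frac{\mu}{\beta_0} \mp \sqrt{\Delta}}{2}$, $I_j = (A-S_j)/\beta_0$, and these satisfy $S_3 < S_4 < A$ (this is used for item (2)). *)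

From Stdlib Require Import Reals Lra.
Open Scope R_scope.

Definition Rnought (A r beta0 a mu : R) : R := beta0 * A / (mu + r / a).

Definition phi0 (r beta0 a mu : R) : R :=
  1 - (a * beta0 - sqrt r) ^ 2 / (a * mu + r).

Definition phi1 (r beta0 a mu : R) : R :=
  (a ^ 2 * beta0 ^ 2 + a * mu) / (a * mu + r).

Definition DeltaE (A r beta0 a mu : R) : R :=
  (a * beta0 + A - mu / beta0) ^ 2 - 4 * r.

Definition S3 (A r beta0 a mu : R) : R :=
  (a * beta0 + A + mu / beta0 - sqrt (DeltaE A r beta0 a mu)) / 2.
Definition S4 (A r beta0 a mu : R) : R :=
  (a * beta0 + A + mu / beta0 + sqrt (DeltaE A r beta0 a mu)) / 2.

(* Over the common denominator [a mu + r], which is positive, each claim is a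
   comparison of numerators.  Writing [s = sqrt r], so that [r = s^2], these
   numerators differ by [a beta0 (mu/beta0 - (a beta0 - 2 s))] for (1),
   [a beta0 (A - a beta0 - mu/beta0)] for (2), [s^2 - (a beta0)^2] for (3) and
   [2 a beta0 (s - a beta0)] for (4); so (1), (3) and (4) are sign conditions,
   and (2) holds because [S4 < A] forces [a beta0 + mu/beta0 < A]. *)
From Stdlib Require Import Reals Lra Psatz.
Open Scope R_scope.

Lemma Rdiv_lt_iff_r (x y z : R) : 0 < z -> (x / z < y / z <-> x < y).
Proof.
  intro hz; split; intro H.
  - apply (Rmult_lt_reg_r (/ z)); [now apply Rinv_0_lt_compat | exact H].
  - apply Rmult_lt_compat_r; [now apply Rinv_0_lt_compat | exact H].
Qed.

Lemma S4_lt_bound (A r beta0 a mu : R) :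
  S4 A r beta0 a mu < A -> a * beta0 + mu / beta0 < A.
Proof.
  unfold S4; intro H.
  pose proof (sqrt_pos (DeltaE A r beta0 a mu)); lra.
Qed.

Section Thresholds.

Variables r beta0 a mu : R.
Hypotheses (hr : 0 < r) (hb : 0 < beta0) (ha : 0 < a) (hmu : 0 < mu).

Let s := sqrt r.

Let s_pos : 0 < s.
Proof. now apply sqrt_lt_R0. Qed.

Let r_eq : r = s * s.
Proof. symmetry; apply sqrt_sqrt; lra. Qed.

Let ab_pos : 0 < a * beta0.
Proof. now apply Rmult_lt_0_compat. Qed.

Let denom_pos : 0 < a * mu + r.
Proof. nra. Qed.

Lemma phi0_fraction :
  phi0 r beta0 a mu = (a * mu + r - (a * beta0 - sqrt r) ^ 2) / (a * mu + r).
Proof. unfold phi0; field; lra. Qed.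

Lemma phi1_lt_1_iff : phi1 r beta0 a mu < 1 <-> a * beta0 < sqrt r.
Proof.
  unfold phi1; rewrite <- (Rdiv_diag (a * mu + r)) by lra.
  rewrite Rdiv_lt_iff_r by exact denom_pos.
  fold s; rewrite r_eq; split; intro H; nra.
Qed.

Lemma phi0_pos_iff : 0 < phi0 r beta0 a mu <-> a * beta0 - 2 * sqrt r < mu / beta0.
Proof.
  assert (numerator : a * mu + r - (a * beta0 - sqrt r) ^ 2
                   = a * beta0 * (mu / beta0 - (a * beta0 - 2 * sqrt r))).
  { fold s; rewrite r_eq; field; lra. }
  rewrite phi0_fraction, <- (Rdiv_0_l (a * mu + r)), Rdiv_lt_iff_r, numerator
    by exact denom_pos.
  split; intro H; nra.
Qed.

Lemma phi1_lt_phi0_iff : phi1 r beta0 a mu < phi0 r beta0 a mu <-> a * beta0 < sqrt r.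
Proof.
  unfold phi1; rewrite phi0_fraction, Rdiv_lt_iff_r by exact denom_pos.
  fold s; rewrite r_eq; split; intro H; nra.
Qed.

Lemma phi1_lt_Rnought (A : R) :
  a * beta0 + mu / beta0 < A -> phi1 r beta0 a mu < Rnought A r beta0 a mu.
Proof.
  intro H.
  assert (Rnought_fraction : Rnought A r beta0 a mu = a * beta0 * A / (a * mu + r)).
  { unfold Rnought; field; lra. }
  assert (numerator : a * beta0 * A - (a ^ 2 * beta0 ^ 2 + a * mu)
                   = a * beta0 * (A - (a * beta0 + mu / beta0))).
  { field; lra. }
  unfold phi1; rewrite Rnought_fraction, Rdiv_lt_iff_r by exact denom_pos.
  nra.
Qed.

End Thresholds.

Theorem lemma5p2 (A r beta0 a mu : R)
  (hA : 0 < A) (hr : 0 < r) (hb : 0 < beta0) (ha : 0 < a) (hmu : 0 < mu)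
  (hDelta : 0 < DeltaE A r beta0 a mu)
  (hS34 : S3 A r beta0 a mu < S4 A r beta0 a mu)
  (hS4A : S4 A r beta0 a mu < A) :
  (a * beta0 - 2 * sqrt r < mu / beta0 <-> 0 < phi0 r beta0 a mu)
  /\ phi1 r beta0 a mu < Rnought A r beta0 a mu
  /\ (a * beta0 < sqrt r -> phi1 r beta0 a mu < 1)
  /\ (a * beta0 < sqrt r <-> phi1 r beta0 a mu < phi0 r beta0 a mu).
Proof.
  split; [| split; [| split]].
  - symmetry; now apply phi0_pos_iff.
  - now apply phi1_lt_Rnought, (S4_lt_bound A r beta0 a mu).
  - now apply phi1_lt_1_iff.
  - symmetry; now apply phi1_lt_phi0_iff.
Qed.
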